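(* Let $G$ be an oriented graph, let $k>0$, and let $P$ be an oriented path of length $n$ with $l=l(P)\ge 1$. If $G$ has a $k$-mindegree pair, then either $G$ contains a copy of $P$ as a subgraph, or $G$ contains an independent set of size at least $\frac{k-n}{l}$.
   Context: An oriented graph is a directed graph without loops and with at most one edge between any two vertices. An oriented path is a path whose edges are oriented arbitrarily; its length is its number of edges, and $l(P)$ is the length of its longest directed subpath. An independent set is a set of vertices spanning no edges. For a directed graph $G$, a $k$-mindegree pair is a pair $(X,Y)$ of disjoint non-empty subsets of $V(G)$ such that every vertex of $X$ has at least $k$ out-neighbours in $Y$ and every vertex of $Y$ has at least $k$ in-neighbours in $X$. *)

From HB Require Import structures.
From mathcomp Require Import all_boot all_order all_algebra.
Set Implicit Arguments. Unset Strict Implicit. Unset Printing Implicit Defensive.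

Definition oriented (T : finType) (E : rel T) : Prop :=
  (forall x, ~~ E x x) /\ (forall x y, E x y -> ~~ E y x).

Definition mindegree_pair (T : finType) (E : rel T) (k : nat) (X Y : {set T}) : Prop :=
  [/\ [disjoint X & Y], X != set0, Y != set0,
      (forall x, x \in X -> k <= #|[set y in Y | E x y]|) &
      (forall y, y \in Y -> k <= #|[set x in X | E x y]|)]%N.

(* An oriented path of length n = size P is encoded by a sequence of n
   booleans: its vertices are p_0, ..., p_n and edge i joins p_i and p_(i+1),
   oriented p_i -> p_(i+1) if nth false P i = true, and p_(i+1) -> p_i otherwise. *)

Definition directed_segment (P : seq bool) (i m : nat) : bool :=
  (i + m <= size P)%N && all (fun j => nth false P (i + j) == nth false P i) (iota 0 m).

Definition lpath (P : seq bool) : nat :=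
  \max_(i < size P) \max_(m < (size P).+1 | directed_segment P i m) m.

Definition contains_path (T : finType) (E : rel T) (P : seq bool) : Prop :=
  exists f : 'I_(size P).+1 -> T, injective f /\
    forall i : 'I_(size P),
      if nth false P i then E (f (widen_ord (leqnSn _) i)) (f (lift ord0 i))
      else E (f (lift ord0 i)) (f (widen_ord (leqnSn _) i)).

Definition independent (T : finType) (E : rel T) (S : {set T}) : Prop :=
  forall x y, x \in S -> y \in S -> ~~ E x y.

From HB Require Import structures.
From mathcomp Require Import all_boot all_order all_algebra.
From mathcomp Require Import zify.
Set Implicit Arguments. Unset Strict Implicit. Unset Printing Implicit Defensive.

(* Cut P into its maximal directed runs, each of length at most l(P), and embed
   them one after the other, starting in X for a forward run.  A run of m forward edges from the
   current endpoint v is sought among the out-neighbours of v in Y that are not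
   yet used: at least k - n vertices.  By the Gallai-Roy theorem these contain a
   directed path on m vertices unless they contain an independent set S with
   l(P) |S| >= k - n.  The run ends in Y, which is where the next (backward) run
   must start; backward runs are handled symmetrically from Y into X.

   Gallai-Roy is proved with a vertex numbering in which every descending edge
   is bridged by an ascending path: the length of the longest ascending path
   from a vertex is then a proper colouring, with fewer than L colours if there
   is no path on L + 1 vertices. *)

Section GallaiRoy.

Variables (T : finType) (R : rel T) (W : {set T}).
Hypothesis R_irr : irreflexive R.

Definition ascending (s : T -> nat) : rel T :=
  fun x y => [&& R x y, x \in W, y \in W & s x < s y].

Definition descents (s : T -> nat) : {set T * T} :=
  [set p | [&& R p.1 p.2, p.1 \in W, p.2 \in W & s p.2 <= s p.1]].

Definition descents_bridged (s : T -> nat) : bool :=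
  [forall p in descents s, connect (ascending s) p.2 p.1].

(* Lifting everything reachable from [v] above [u] turns the unbridged descent
   [(u, v)] into an ascent without creating new descents. *)
Lemma card_descents_decrease (s : T -> nat) :
  ~~ descents_bridged s -> exists s', #|descents s'| < #|descents s|.
Proof.
case/forall_inPn => [[u v]] /= uv_desc not_bridged.
pose above := [set x | connect (ascending s) v x].
exists (fun x => if x \in above then s x + (s u).+1 else s x).
apply/proper_card/properP; split.
  apply/subsetP => [[x y]]; rewrite !inE /= => /and4P [Rxy Wx Wy].
  rewrite Rxy Wx Wy /=.
  case Ax: (connect _ v x); case Ay: (connect _ v y); try lia.
  move=> _; rewrite leqNgt; apply/negP => lt_xy; move/negbT/negP: Ay; apply.
  by apply: connect_trans Ax (connect1 _); rewrite /ascending Rxy Wx Wy lt_xy.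
exists (u, v) => //; rewrite !inE /= (negbTE not_bridged) connect0.
by apply/negP => /and4P [_ _ _]; lia.
Qed.

Lemma exists_descents_bridged : exists s, descents_bridged s.
Proof.
have [m] := ubnP #|descents (fun=> 0)|; elim: m (fun=> 0) => // m IHm s lt_s.
case: (boolP (descents_bridged s)) => [|/card_descents_decrease [s' lt_s's]].
  by exists s.
by apply: (IHm s'); lia.
Qed.

Section Levels.

Variable s : T -> nat.
Hypothesis s_bridged : descents_bridged s.

Definition ascent (t : nat) (x : T) : bool :=
  [exists q : t.-tuple T, path (ascending s) x q].

Lemma ascentP t x :
  reflect (exists2 q, size q = t & path (ascending s) x q) (ascent t x).
Proof.
apply: (iffP existsP) => [[q q_path] | [q <- q_path]].
  by exists q; rewrite ?size_tuple.
by exists (in_tuple q).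
Qed.

Lemma ascending_path_uniq x q : path (ascending s) x q -> uniq (x :: q).
Proof.
move=> /(sub_path (_ : subrel _ (relpre s ltn))) lt_path.
apply: (@map_uniq _ _ s); apply: (sorted_uniq ltn_trans ltnn).
by rewrite /= path_map; apply: lt_path => a b /and4P [].
Qed.

Lemma ascending_path_subset x q : path (ascending s) x q -> {subset q <= W}.
Proof.
elim: q x => [|y q IHq] x //= /andP [/and4P [_ _ Wy _] /IHq sub_q] z.
by rewrite inE => /predU1P [-> | /sub_q].
Qed.

Lemma ascent_bound t x : ascent t x -> t <= #|T|.
Proof.
case/ascentP => q <- /ascending_path_uniq /card_uniqP /= card_q.
by apply: leq_trans (max_card (mem (x :: q))); rewrite card_q.
Qed.

Lemma exists_ascent x : exists t, ascent t x.
Proof. by exists 0; apply/ascentP; exists [::]. Qed.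

Definition level (x : T) : nat := ex_maxn (exists_ascent x) (@ascent_bound^~ x).

Lemma levelP x :
  ascent (level x) x /\ forall t, ascent t x -> t <= level x.
Proof. by rewrite /level; case: ex_maxnP. Qed.

Lemma level_ascending x y : ascending s x y -> level y < level x.
Proof.
move=> xy; have [/ascentP [q size_q q_path] _] := levelP y.
apply: (levelP x).2; apply/ascentP; exists (y :: q) => /=.
  by rewrite size_q.
by rewrite xy.
Qed.

Lemma level_connect x y : connect (ascending s) x y -> level y <= level x.
Proof.
case/connectP => p; elim: p x => [|z p IHp] x /=; first by move=> _ ->.
case/andP => /level_ascending lt_zx /IHp le_yz /le_yz; lia.
Qed.

Lemma level_edge x y : R x y -> x \in W -> y \in W -> level x != level y.
Proof.
move=> Rxy Wx Wy; case: (ltnP (s x) (s y)) => [lt_xy | le_yx].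
  by rewrite gtn_eqF // level_ascending // /ascending Rxy Wx Wy.
have desc_xy : (x, y) \in descents s by rewrite inE /= Rxy Wx Wy le_yx.
case/connectP: (forall_inP s_bridged _ desc_xy) => /= [[|z p]] /=.
  by move=> _ eq_xy; rewrite eq_xy R_irr in Rxy.
case/andP => /level_ascending lt_zy p_path def_x.
have /level_connect le_xz : connect (ascending s) z x by apply/connectP; exists p.
by rewrite ltn_eqF // (leq_ltn_trans le_xz lt_zy).
Qed.

End Levels.

Lemma gallai_roy_path L :
  (forall S : {set T}, S \subset W -> independent R S -> L * #|S| < #|W|) ->
  exists x q, [/\ size q = L, uniq (x :: q), {subset x :: q <= W} & path R x q].
Proof.
move=> small_indep; have [s s_bridged] := exists_descents_bridged.
case: (boolP [exists x in W, L <= level s x]) => [/exists_inP [x Wx le_Lx] | no_high].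
  have [/ascentP [q size_q q_path] _] := levelP s x.
  exists x, (take L q); split.
  - by rewrite size_takel // size_q.
  - by have := take_uniq L.+1 (ascending_path_uniq q_path).
  - move=> y; rewrite inE => /predU1P [-> // |].
    by move/mem_take/(ascending_path_subset q_path).
  - by apply: sub_path (take_path L q_path) => a b /and4P [].
have lt_level x : x \in W -> level s x < L.
  move=> Wx; rewrite ltnNge; apply: contraNN no_high => le_Lx.
  by apply/exists_inP; exists x.
have W_pos : 0 < #|W|.
  have indep0 : independent R set0 by move=> x y; rewrite inE.
  by move: (small_indep set0 (sub0set _) indep0); rewrite cards0 muln0.
have /card_gt0P [x0 W_x0] := W_pos.
case: L => [|L] in small_indep no_high lt_level *; first by have := lt_level x0 W_x0.
pose class c := [set x in W | level s x == c].
have small_class c : L.+1 * #|class c| < #|W|.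
  apply: small_indep; first by apply/subsetP => x; rewrite inE => /andP [].
  move=> x y; rewrite !inE => /andP [Wx /eqP lx] /andP [Wy /eqP ly].
  by apply/negP => Rxy; have := level_edge s_bridged Rxy Wx Wy; rewrite lx ly eqxx.
have card_W : #|W| = \sum_(c < L.+1) #|class c|.
  rewrite -sum1_card (partition_big (fun x => inord (level s x) : 'I_L.+1) predT) //=.
  apply: eq_bigr => c _; rewrite -sum1_card; apply: eq_bigl => x.
  rewrite inE; case Wx: (x \in W) => //=.
  by rewrite -(inj_eq val_inj) /= inordK // lt_level.
have : L.+1 * #|W| <= L.+1 * (#|W|).-1.
  rewrite {1}card_W big_distrr /=.
  apply: leq_trans (_ : \sum_(c < L.+1) (#|W|).-1 <= _).
    by apply: leq_sum => c _; have := small_class c; lia.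
  by rewrite sum_nat_const card_ord.
nia.
Qed.
End GallaiRoy.

Lemma directed_segment_le_lpath P i m : directed_segment P i m -> m <= lpath P.
Proof.
case: m => // m seg; have /andP [le_iP _] := seg.
have i_lt : i < size P by lia.
have m_lt : m.+1 < (size P).+1 by lia.
apply: leq_trans (leq_bigmax (Ordinal i_lt)).
exact: (leq_bigmax_cond (Ordinal m_lt) seg).
Qed.

Lemma directed_segment_cat s P i m :
  directed_segment P i m -> directed_segment (s ++ P) (size s + i) m.
Proof.
rewrite /directed_segment size_cat => /andP [le_iP /allP seg].
apply/andP; split; first by lia.
apply/allP => j /seg; rewrite !nth_cat -addnA !ltnNge !leq_addr /=.
by rewrite !addKn.
Qed.

Lemma directed_segment_nseq m b P : directed_segment (nseq m b ++ P) 0 m.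
Proof.
rewrite /directed_segment size_cat size_nseq leq_addr /=.
apply/allP => j; rewrite mem_iota /= => lt_jm.
have m_pos : 0 < m by apply: leq_ltn_trans lt_jm.
by rewrite !nth_cat size_nseq lt_jm m_pos !nth_nseq lt_jm m_pos.
Qed.

Lemma run_decomposition b P :
  exists m P', [/\ 0 < m, b :: P = nseq m b ++ P' & head (~~ b) P' = ~~ b].
Proof.
elim: P b => [|c P IHP] b; first by exists 1, [::].
have [<- | /negPf neq_cb] := eqVneq c b.
  by have [m [P' [m_pos -> head_P']]] := IHP c; exists m.+1, P'.
by exists 1, (c :: P); split => //=; case: b c neq_cb => [] [].
Qed.

Definition edge_of (T : finType) (E : rel T) (b : bool) : rel T :=
  fun x y => if b then E x y else E y x.

Lemma independent_edge_of (T : finType) (E : rel T) b (S : {set T}) :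
  independent (edge_of E b) S -> independent E S.
Proof. by case: b => indep x y Sx Sy; [apply: indep | apply: indep Sy Sx]. Qed.

Fixpoint traces (T : finType) (E : rel T) (v : T) (Q : seq bool) (t : seq T) : bool :=
  match Q, t with
  | b :: Q', w :: t' => edge_of E b v w && traces E w Q' t'
  | [::], [::] => true
  | _, _ => false
  end.

Lemma traces_cat (T : finType) (E : rel T) v Q1 Q2 t1 t2 :
  size t1 = size Q1 ->
  traces E v (Q1 ++ Q2) (t1 ++ t2) = traces E v Q1 t1 && traces E (last v t1) Q2 t2.
Proof. by elim: Q1 t1 v => [|b Q1 IHQ] [|w t1] v //= [/IHQ ->]; rewrite andbA. Qed.

Lemma traces_nseq (T : finType) (E : rel T) b v t :
  traces E v (nseq (size t) b) t = path (edge_of E b) v t.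
Proof. by elim: t v => //= w t IHt v; rewrite IHt. Qed.

Lemma traces_contains_path (T : finType) (E : rel T) v P t :
  traces E v P t -> uniq (v :: t) -> contains_path E P.
Proof.
have nth_edge : traces E v P t -> size t = size P /\ forall i, i < size P ->
    edge_of E (nth false P i) (nth v (v :: t) i) (nth v (v :: t) i.+1).
  elim: P t v => [|b P IHP] [|w t] u //= /andP [uw /IHP [size_t edges]].
  split=> [|[|i] lt_iP] //=; first by rewrite size_t.
  by have := edges i lt_iP; rewrite !(set_nth_default u w) //= size_t; lia.
move=> /nth_edge [size_t edges] uniq_vt.
exists (fun i : 'I_(size P).+1 => nth v (v :: t) i); split=> [i j /eqP | i].
  by rewrite nth_uniq //= ?size_t // => /eqP /val_inj.
by rewrite lift0; apply: edges.
Qed.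

Section GreedyEmbedding.

Variables (T : finType) (E : rel T) (X Y : {set T}) (k n l : nat).
Hypothesis E_irr : irreflexive E.
Hypothesis X_outdeg : forall x, x \in X -> k <= #|[set y in Y | E x y]|.
Hypothesis Y_indeg : forall y, y \in Y -> k <= #|[set x in X | E x y]|.
Hypothesis small_indep : forall S, independent E S -> l * #|S| < k - n.

(* A vertex where an edge of orientation [b] starts must lie in [side b]; the
   edge then ends in [side (~~ b)]. *)
Definition side (b : bool) : {set T} := if b then X else Y.

Lemma extend_run b m (U : {set T}) v :
  v \in side b -> v \notin U -> 0 < m <= l -> #|U| + m <= n ->
  exists t, [/\ size t = m, path (edge_of E b) v t, uniq (v :: t),
                [disjoint t & U] & last v t \in side (~~ b)].
Proof.
move=> v_side v_U /andP [m_pos le_ml] card_U.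
pose N := [set y in side (~~ b) | edge_of E b v y].
have N_big : k <= #|N|.
  by rewrite /N /side /edge_of; case: (b) v_side => /= v_side; [apply: X_outdeg | apply: Y_indeg].
pose W := N :\: (v |: U).
have W_big : k - n <= #|W|.
  rewrite /W cardsD.
  have : #|N :&: (v |: U)| <= #|v |: U| by apply/subset_leq_card/subsetIr.
  rewrite cardsU1; lia.
have W_sub y : y \in W -> [/\ y != v, y \notin U, y \in side (~~ b) & edge_of E b v y].
  by rewrite !inE negb_or => /andP [/andP [-> ->] /andP [-> ->]].
case: m => // m in m_pos le_ml card_U *.
have edge_irr : irreflexive (edge_of E b) by move=> y; rewrite /edge_of; case: (b).
have small_in_W (S : {set T}) :
    S \subset W -> independent (edge_of E b) S -> m * #|S| < #|W|.
  move=> _ /independent_edge_of /small_indep small_S.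
  exact: leq_ltn_trans (leq_mul (ltnW le_ml) (leqnn _)) (leq_trans small_S W_big).
have [x [q [size_q uniq_xq sub_xqW path_xq]]] := gallai_roy_path edge_irr small_in_W.
have [x_v x_U _ vx] := W_sub x (sub_xqW x (mem_head x q)).
exists (x :: q); split => //=.
- by rewrite size_q.
- by rewrite vx path_xq.
- move: uniq_xq => /= ->; rewrite andbT.
  by apply/negP => /sub_xqW /W_sub []; rewrite eqxx.
- by rewrite disjoint_has; apply/hasPn => y /sub_xqW /W_sub [].
- by have [] := W_sub _ (sub_xqW _ (mem_last x q)).
Qed.

Lemma greedy_embedding Q b (U : {set T}) v :
  (forall i m, directed_segment Q i m -> m <= l) ->
  v \in side (head b Q) -> v \notin U -> #|U| + size Q <= n ->
  exists t, [/\ traces E v Q t, uniq (v :: t) & [disjoint t & U]].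
Proof.
have [N] := ubnP (size Q); elim: N Q b U v => // N IHN [|b0 Q] b U v.
  by move=> *; exists [::]; rewrite disjoint_has.
move=> lt_QN runs v_side v_U card_U.
have [m [Q' [m_pos def_Q head_Q']]] := run_decomposition b0 Q.
have m_le_l : m <= l by apply: (runs 0); rewrite def_Q directed_segment_nseq.
have size_Q : size (b0 :: Q) = m + size Q' by rewrite def_Q size_cat size_nseq.
have [t1 [size_t1 path_t1 uniq_t1 t1_U last_t1]] :
    exists t1, [/\ size t1 = m, path (edge_of E b0) v t1, uniq (v :: t1),
                 [disjoint t1 & U] & last v t1 \in side (~~ b0)].
  by apply: extend_run => //; [rewrite m_pos | lia].
set z := last v t1 in last_t1.
pose B := belast v t1.
have def_vt1 : v :: t1 = rcons B z by rewrite lastI.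
have /andP [z_B uniq_B] : (z \notin B) && uniq B by rewrite -rcons_uniq -def_vt1.
have z_U : z \notin U.
  by rewrite /z; case/predU1P: (mem_last v t1) => [/= -> | /(disjointFr t1_U) /negbT].
pose U' := U :|: [set y in B].
have z_U' : z \notin U' by rewrite !inE negb_or z_U.
have card_U' : #|U'| <= #|U| + m.
  rewrite cardsU cardsE; apply: leq_trans (leq_subr _ _) _.
  by rewrite leq_add2l -size_t1 -(size_belast v); apply: card_size.
have runs' i m' : directed_segment Q' i m' -> m' <= l.
  by move/(directed_segment_cat (nseq m b0)); rewrite size_nseq -def_Q; apply: runs.
have z_side : z \in side (head (~~ b0) Q') by rewrite head_Q'.
have lt_Q'N : size Q' < N.
  by move: lt_QN; rewrite ltnS size_Q; apply: leq_trans; rewrite -{1}[size Q']add0n ltn_add2r.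
have card_U'Q' : #|U'| + size Q' <= n.
  by apply: leq_trans (leq_add card_U' (leqnn _)) _; rewrite -addnA -size_Q.
have [t2 [traces_t2 uniq_t2 t2_U']] := IHN Q' (~~ b0) U' z lt_Q'N runs' z_side z_U' card_U'Q'.
exists (t1 ++ t2); split.
- rewrite def_Q traces_cat ?size_nseq // -[in nseq _ _]size_t1 traces_nseq.
  by rewrite path_t1.
- rewrite -cat_cons def_vt1 cat_rcons cat_uniq uniq_B uniq_t2 andbT /= negb_or z_B /=.
  rewrite disjoint_has in t2_U'; apply: contra t2_U'.
  by apply: sub_has => y; rewrite !inE orbC => ->.
- rewrite disjoint_cat t1_U; apply: disjointWr t2_U'.
  by apply/subsetP => y; rewrite !inE => ->.
Qed.

End GreedyEmbedding.

Import Order.TTheory GRing.Theory Num.Theory.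

Lemma rat_sub_div_le (k n l s : nat) : (0 < l)%N -> (k - n <= l * s)%N ->
  ((k%:Q - n%:Q) / l%:Q <= s%:Q)%R.
Proof.
move=> l_pos le_kn_ls; rewrite ler_pdivrMr ?ltr0n //.
have [le_kn | lt_nk] := leqP k n.
  by apply: le_trans (_ : 0 <= _)%R; rewrite ?subr_le0 ?ler_nat // -natrM ler0n.
by rewrite -natrB ?(ltnW lt_nk) // -natrM ler_nat mulnC.
Qed.

Theorem mainTheorem7 (T : finType) (E : rel T) (k n : nat) (P : seq bool) :
  oriented E -> (0 < k)%N -> size P = n -> (1 <= lpath P)%N ->
  (exists X Y : {set T}, mindegree_pair E k X Y) ->
  contains_path E P \/
  exists S : {set T}, independent E S /\
    ((k%:Q - n%:Q) / (lpath P)%:Q <= (#|S|)%:Q)%R.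
Proof.
move=> [E_loopless _] _ size_P lP_pos [X [Y [_ X0 Y0 X_outdeg Y_indeg]]].
pose big_indep (S : {set T}) :=
  [forall x in S, forall y in S, ~~ E x y] && (k - n <= lpath P * #|S|)%N.
have [/existsP [S /andP [/forall_inP indep_S big_S]] | no_big] :=
  boolP [exists S, big_indep S].
  right; exists S; split; last exact: rat_sub_div_le.
  by move=> x y /indep_S /forall_inP; apply.
left; have small_indep S : independent E S -> (lpath P * #|S| < k - n)%N.
  move=> indep_S; rewrite ltnNge; apply: contraNN no_big => big_S.
  apply/existsP; exists S; rewrite /big_indep big_S andbT.
  by apply/forall_inP => x Sx; apply/forall_inP => y; apply: indep_S.
have [v v_side] : exists v, v \in side X Y (head true P).
  by rewrite /side; case: (head true P); apply/set0Pn.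
have card_P : (#|(set0 : {set T})| + size P <= n)%N by rewrite cards0 size_P.
have E_irr : irreflexive E by move=> x; apply/negbTE.
have [t [traces_t uniq_vt _]] := greedy_embedding E_irr X_outdeg Y_indeg small_indep
  (@directed_segment_le_lpath P) v_side (negbT (in_set0 v)) card_P.
exact: traces_contains_path traces_t uniq_vt.
Qed.
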